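(* For $t\ge t_0$ let $\mathcal S^t:=\{f\in\Omega:\forall s\in(0,t): f(-s)-f(-t)>b+c_2t-c_1s\}$. Then, with closures taken in $\Omega$, $$\overline{\mathcal S^t}=\{f\in\Omega:\ \forall s\in(0,t):\ f(-s)-f(-t)\ge b+c_2t-c_1s\},\qquad \overline{\mathcal S}=\bigcup_{t\ge t_0}\overline{\mathcal S^t}.$$
   Context: $\Omega$ is the set of continuous $\omega:\mathbb R\to\mathbb R$ with $\omega(0)=0$ and $\omega(t)/(1+|t|)\to0$ as $t\to\pm\infty$, with norm $\|\omega\|_\Omega:=\sup_{t\in\mathbb R}|\omega(t)|/(1+|t|)$. Fix $b>0$, $c_1>c_2>0$, $t_0:=b/(c_1-c_2)$, and $$\mathcal S:=\{f\in\Omega:\ \exists t>t_0\ \forall s\in(0,t):\ f(-s)-f(-t)>b+c_2t-c_1s\}=\bigcup_{t>t_0}\mathcal S^t.$$ *)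

From HB Require Import structures.
From mathcomp Require Import all_boot all_order all_algebra.
From mathcomp Require Import all_classical all_reals all_analysis.
Set Implicit Arguments. Unset Strict Implicit. Unset Printing Implicit Defensive.
Import Order.TTheory GRing.Theory Num.Theory.
Import numFieldNormedType.Exports.
Local Open Scope classical_set_scope.
Local Open Scope ring_scope.

Section OmegaDefs.
Variable R : realType.

Definition Omega : set (R -> R) :=
  [set f : R -> R | continuous f /\ f 0 = 0 /\
     (fun t : R => f t / (1 + `|t|)) @ +oo --> (0 : R) /\
     (fun t : R => f t / (1 + `|t|)) @ -oo --> (0 : R)].

Definition normOmega (f : R -> R) : R :=
  sup [set `|f t| / (1 + `|t|) | t in [set: R]].

Definition closureOmega (A : set (R -> R)) : set (R -> R) :=
  [set f | Omega f /\ forall e : R, 0 < e ->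
     exists g, A g /\ normOmega (f \- g) < e].

Definition t0 (b c1 c2 : R) : R := b / (c1 - c2).

Definition St (b c1 c2 t : R) : set (R -> R) :=
  [set f | Omega f /\ forall s, 0 < s < t -> f (- s) - f (- t) > b + c2 * t - c1 * s].

Definition StClosed (b c1 c2 t : R) : set (R -> R) :=
  [set f | Omega f /\ forall s, 0 < s < t -> f (- s) - f (- t) >= b + c2 * t - c1 * s].

Definition S (b c1 c2 : R) : set (R -> R) :=
  \bigcup_(t in [set t | t0 b c1 c2 < t]) St b c1 c2 t.

End OmegaDefs.

From HB Require Import structures.
From mathcomp Require Import all_boot all_order all_algebra.
From mathcomp Require Import all_classical all_reals all_analysis.
From mathcomp Require Import ring lra.
Import Order.TTheory GRing.Theory Num.Theory.
Import numFieldNormedType.Exports.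
Local Open Scope classical_set_scope.
Local Open Scope ring_scope.

(* Approximation in the norm of Omega controls increments f(-s) - f(-t) on
   compacts, so closures only relax the strict inequalities to weak ones.
   Conversely, adding d * clamp_[-t, t] turns the weak inequalities into
   strict ones, and replacing f on [-(t + d), -t] by a ramp of slope c1 moves
   it into S^(t + d); this is where t >= t0, i.e. b <= (c1 - c2) t, is used.
   For the closure of S, letting s -> 0 shows -g(-t) >= b + c2 t for every
   g in S^t, which is incompatible with g being close to a fixed f in Omega
   when t is large; so the parameters t of approximants of f stay bounded,
   and a cluster value ts of them gives f in the closure of S^ts. *)

Set Implicit Arguments. Unset Strict Implicit.

Section OmegaSpace.
Variable R : realType.
Implicit Types (f g k : R -> R) (x y e B : R).

Definition clamp (a c x : R) : R := Num.min (Num.max x a) c.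

Lemma clamp_continuous (a c : R) : continuous (clamp a c).
Proof.
move=> x; apply: (@continuous_min R R (fun x => Num.max x a) (fun=> c)).
  by apply: (@continuous_max R R id (fun=> a)); [exact: cvg_id | exact: cst_continuous].
exact: cst_continuous.
Qed.

Lemma clamp_id (a c x : R) : a <= x <= c -> clamp a c x = x.
Proof. by case/andP=> ax xc; rewrite /clamp (max_idPl ax) (min_idPl xc). Qed.

Lemma clamp_lo (a c x : R) : a <= c -> x <= a -> clamp a c x = a.
Proof. by move=> ac xa; rewrite /clamp (max_idPr xa) (min_idPl ac). Qed.

Lemma clamp_hi (a c x : R) : a <= c -> c <= x -> clamp a c x = c.
Proof. by move=> ac cx; rewrite /clamp (max_idPl (le_trans ac cx)) (min_idPr cx). Qed.

Lemma clamp_itv (a c x : R) : a <= c -> a <= clamp a c x <= c.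
Proof.
move=> ac; have [xa|ax] := leP x a; first by rewrite clamp_lo ?lexx ?ac.
have [cx|xc] := leP c x; first by rewrite clamp_hi ?lexx ?ac.
by rewrite clamp_id ?ltW ?ax ?xc.
Qed.

Lemma continuous_dist_lt f x e : continuous f -> 0 < e ->
  exists2 d, 0 < d & forall y, `|x - y| < d -> `|f x - f y| < e.
Proof.
move=> cf e0; have /cvgrPdist_lt/(_ e e0)/nbhs_ballP [d d0 Hd] := cf x.
by exists d.
Qed.

Lemma weight_gt0 x : 0 < 1 + `|x|.
Proof. by rewrite ltr_wpDr. Qed.

Lemma norm_weighted f x : `|f x / (1 + `|x|)| = `|f x| / (1 + `|x|).
Proof. by rewrite normrM normfV (gtr0_norm (weight_gt0 x)). Qed.

Lemma weighted_le f x : `|f x| / (1 + `|x|) <= `|f x|.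
Proof. by rewrite ler_pdivrMr ?weight_gt0 // ler_peMr // lerDl. Qed.

Lemma Omega_weighted_bounded f : Omega f ->
  exists B, forall x, `|f x| / (1 + `|x|) <= B.
Proof.
move=> [cf [_ [fpinfty fninfty]]].
have [M1 [_ HM1]] := (cvgrPdist_lt _ _).1 fninfty 1 ltr01.
have [M2 [_ HM2]] := (cvgrPdist_lt _ _).1 fpinfty 1 ltr01.
have M12 : M1 <= Num.max M1 M2 by rewrite le_max lexx.
have cnf : {within `[M1, Num.max M1 M2], continuous (fun x => `|f x|)}.
  apply: continuous_subspaceT => x.
  exact: (continuous_comp (cf x) (@norm_continuous _ R^o _)).
have [c _ Hc] := EVT_max M12 cnf.
exists (Num.max 1 `|f c|) => x.
have [xM1|M1x] := ltP x M1.
  have := HM1 _ xM1; rewrite sub0r normrN norm_weighted => /ltW/le_trans; apply.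
  by rewrite le_max lexx.
have [M2x|xM2] := ltP M2 x.
  have := HM2 _ M2x; rewrite sub0r normrN norm_weighted => /ltW/le_trans; apply.
  by rewrite le_max lexx.
apply: le_trans (weighted_le f x) _; apply: le_trans (Hc x _) _.
  by rewrite in_itv /= M1x le_max xM2 orbT.
by rewrite le_max lexx orbT.
Qed.

Lemma OmegaD f g : Omega f -> Omega g -> Omega (f \+ g).
Proof.
move=> [cf [f0 [fp fn]]] [cg [g0 [gp gn]]]; split.
  by move=> x; exact: (continuousD (cf x) (cg x)).
split; first by rewrite /= f0 g0 addr0.
have -> : (fun x => (f \+ g) x / (1 + `|x|)) =
    (fun x => f x / (1 + `|x|)) + (fun x => g x / (1 + `|x|)).
  by apply: funext => x /=; rewrite mulrDl.
by split; rewrite -[0 : R]addr0; exact: cvgD.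
Qed.

Lemma OmegaN f : Omega f -> Omega (\- f).
Proof.
move=> [cf [f0 [fp fn]]]; split; first by move=> x; exact: (continuousN (cf x)).
split; first by rewrite /= f0 oppr0.
have -> : (fun x => (\- f) x / (1 + `|x|)) = - (fun x => f x / (1 + `|x|)).
  by apply: funext => x /=; rewrite mulNr.
by split; rewrite -oppr0; exact: cvgN.
Qed.

Lemma OmegaB f g : Omega f -> Omega g -> Omega (f \- g).
Proof. by move=> Of /OmegaN; exact: OmegaD. Qed.

Lemma normOmega_ge f x : Omega f -> `|f x| / (1 + `|x|) <= normOmega f.
Proof.
move=> /Omega_weighted_bounded [B HB]; apply: ub_le_sup; last by exists x.
by exists B => _ [y _ <-].
Qed.

Lemma normOmega_le f B : (forall x, `|f x| / (1 + `|x|) <= B) -> normOmega f <= B.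
Proof.
move=> HB; apply: ge_sup; first by exists (`|f 0| / (1 + `|0 : R|)), 0.
by move=> _ [y _ <-].
Qed.

Lemma normOmega_lt_pointwise f g e x : Omega f -> Omega g ->
  normOmega (f \- g) < e -> `|f x - g x| <= e * (1 + `|x|).
Proof.
move=> Of Og fge; rewrite -ler_pdivrMr ?weight_gt0 //.
exact: le_trans (normOmega_ge x (OmegaB Of Og)) (ltW fge).
Qed.

Lemma normOmega_lt_increment f g e x y : Omega f -> Omega g ->
  normOmega (f \- g) < e ->
  g x - g y - e * ((1 + `|x|) + (1 + `|y|)) <= f x - f y.
Proof.
move=> Of Og fge.
move: (normOmega_lt_pointwise x Of Og fge) (normOmega_lt_pointwise y Of Og fge).
rewrite !ler_norml mulrDr => /andP [hx _] /andP [_ hy]; lra.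
Qed.

Lemma bounded_weighted_lt k B e x : (forall y, `|k y| <= B) -> 0 < e ->
  B / e < `|x| -> `|k x / (1 + `|x|)| < e.
Proof.
move=> kB e0; rewrite ltr_pdivrMr // norm_weighted ltr_pdivrMr ?weight_gt0 // => Bx.
by apply: le_lt_trans (kB x) _; rewrite mulrDr mulr1; lra.
Qed.

Lemma Omega_bounded k B : continuous k -> k 0 = 0 ->
  (forall x, `|k x| <= B) -> Omega k.
Proof.
move=> ck k0 kB; split=> //; split=> //; split; apply/cvgrPdist_lt => e e0.
  exists (B / e); split; first by rewrite num_real.
  move=> x Bx; rewrite sub0r normrN; apply: bounded_weighted_lt => //.
  exact: lt_le_trans Bx (ler_norm x).
exists (- (B / e)); split; first by rewrite num_real.
move=> x Bx; rewrite sub0r normrN; apply: bounded_weighted_lt => //.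
by rewrite ltrNr in Bx; rewrite -normrN; exact: lt_le_trans Bx (ler_norm _).
Qed.

Lemma Omega_add_bounded f k B : Omega f -> continuous k -> k 0 = 0 ->
  (forall x, `|k x| <= B) -> Omega (f \+ k) /\ normOmega (f \- (f \+ k)) <= B.
Proof.
move=> Of ck k0 kB; split; first exact: OmegaD Of (Omega_bounded ck k0 kB).
apply: normOmega_le => x /=; rewrite opprD addrA subrr sub0r normrN.
exact: le_trans (weighted_le k x) (kB x).
Qed.

End OmegaSpace.

Lemma shrinking_sets_cluster (R : realType) (T : R -> set R) (m M e0 : R) :
  0 < e0 ->
  (forall e1 e2, e1 <= e2 -> T e1 `<=` T e2) ->
  (forall e, 0 < e -> T e !=set0) ->
  (forall e, T e `<=` [set t | m <= t]) ->
  T e0 `<=` [set t | t <= M] ->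
  exists2 ts, m <= ts &
    forall d e, 0 < d -> 0 < e -> exists2 t, T e t & `|t - ts| < d.
Proof.
move=> e0_gt0 Tmono Tne Tlb Tub.
pose B := [set x | forall e, 0 < e -> exists2 t, T e t & x <= t].
have Bm : B m by move=> e /Tne [t Tt]; exists t => //; exact: Tlb Tt.
have BM : ubound B M by move=> x /(_ e0 e0_gt0) [t /Tub tM xt]; exact: le_trans tM.
have supB : has_sup B by split; [exists m | exists M].
exists (sup B); first exact: sup_upper_bound.
move=> d e d_gt0 e_gt0.
have [t1 Bt1 t1d] := sup_adherent d_gt0 supB.
have [e1 e1_gt0 Te1] : exists2 e1, 0 < e1 & forall t, T e1 t -> t < sup B + d.
  have : ~ B (sup B + d).
    by move=> /(sup_upper_bound supB); rewrite gerDl leNgt d_gt0.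
  move=> /existsNP [e1 /not_implyP [e1_gt0 noT]]; exists e1 => // t Tt.
  by rewrite ltNge; apply/negP => tB; apply: noT; exists t.
have [mine mine1] : Num.min e e1 <= e /\ Num.min e e1 <= e1.
  by rewrite !ge_min !lexx orbT.
have [|t Tt t1t] := Bt1 (Num.min e e1); first by rewrite lt_min e_gt0 e1_gt0.
exists t; first exact: Tmono mine _ Tt.
have := Te1 t (Tmono _ _ mine1 _ Tt).
rewrite ltr_norml => tBd; apply/andP; split; lra.
Qed.

Section Closures.
Variables (R : realType) (b c1 c2 : R).
Hypotheses (b_gt0 : 0 < b) (c2_gt0 : 0 < c2) (c21 : c2 < c1).
Implicit Types (f g : R -> R).

Lemma t0_gt0 : 0 < t0 b c1 c2.
Proof. by rewrite /t0 divr_gt0 // subr_gt0. Qed.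

Lemma t0_leP t : t0 b c1 c2 <= t -> b <= (c1 - c2) * t.
Proof. by rewrite /t0 ler_pdivrMr ?subr_gt0 // mulrC. Qed.

Lemma StClosed_of_approx f t : Omega f ->
  (forall d e, 0 < d -> 0 < e -> exists t' g,
     `|t' - t| < d /\ St b c1 c2 t' g /\ normOmega (f \- g) < e) ->
  StClosed b c1 c2 t f.
Proof.
move=> Of approx; split=> // s /andP [s0 st].
apply/ler_addgt0Pr => eps eps0.
have [cf _] := Of.
have eps3 : 0 < eps / 3 by lra.
have [d1 d1_gt0 fd1] := continuous_dist_lt (- t) cf eps3.
set d := Num.min d1 (Num.min (t - s) (Num.min 1 (eps / (3 * c2)))).
have [dd1 dts d1' dc2] : [/\ d <= d1, d <= t - s, d <= 1 & d <= eps / (3 * c2)].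
  by rewrite /d !ge_min !lexx !orbT.
have d_gt0 : 0 < d by rewrite /d !lt_min d1_gt0 subr_gt0 st ltr01 divr_gt0 ?mulr_gt0.
set W := 3 + s + t; have W_gt0 : 0 < W by rewrite /W; lra.
have [|t' [g [tt' [[Og Hg] fge]]]] := approx d (eps / 3 / W) d_gt0.
  by rewrite !divr_gt0.
move: (tt'); rewrite ltr_norml => /andP [tt'1 tt'2].
have t'_gt0 : 0 < t' by lra.
have := normOmega_lt_increment (- s) (- t') Of Og fge.
rewrite !normrN !gtr0_norm // => fg.
have : b + c2 * t' - c1 * s < g (- s) - g (- t') by apply: Hg; apply/andP; split; lra.
have err : eps / 3 / W * ((1 + s) + (1 + t')) <= eps / 3.
  rewrite -[leRHS](divfK (lt0r_neq0 W_gt0)) ler_pM2l ?divr_gt0 //.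
  by rewrite /W; lra.
have ftt' : `|f (- t) - f (- t')| < eps / 3.
  by apply: fd1; rewrite opprK addrC; exact: lt_le_trans tt' dd1.
have c2d : c2 * d <= eps / 3.
  have -> : eps / 3 = c2 * (eps / (3 * c2)) by field; rewrite gt_eqF.
  by rewrite ler_pM2l.
have c2tt' : c2 * (t - t') <= eps / 3.
  by apply: le_trans c2d; rewrite ler_pM2l //; lra.
rewrite mulrBr in c2tt'.
move: ftt'; rewrite ltr_norml => /andP [_ ftt']; lra.
Qed.

Lemma closure_St_sub t : closureOmega (St b c1 c2 t) `<=` StClosed b c1 c2 t.
Proof.
move=> f [Of fS]; apply: StClosed_of_approx => // d e d0 e0.
have [g [Sg fge]] := fS e e0.
by exists t, g; rewrite subrr normr0.
Qed.

Lemma StClosed_sub_closure_St t : t0 b c1 c2 <= t ->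
  StClosed b c1 c2 t `<=` closureOmega (St b c1 c2 t).
Proof.
move=> t0t f [Of fS]; split=> // e e0.
have t_gt0 : 0 < t := lt_le_trans t0_gt0 t0t.
set d := e / (2 * t); have d_gt0 : 0 < d by rewrite divr_gt0 ?mulr_gt0.
pose k x := d * clamp (- t) t x.
have ck : continuous k.
  move=> x; apply: (@continuousM R R (fun=> d) (clamp _ _)).
    exact: cst_continuous.
  exact: clamp_continuous.
have tt : - t <= t by lra.
have k0 : k 0 = 0 by rewrite /k clamp_id ?mulr0 //; apply/andP; split; lra.
have kB : forall x, `|k x| <= e / 2.
  move=> x; have /andP [kx1 kx2] := clamp_itv x tt.
  have -> : e / 2 = d * t by rewrite /d; field; rewrite gt_eqF.
  rewrite /k normrM gtr0_norm //.
  by rewrite ler_pM2l // ler_norml kx1 kx2.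
have [Ofk fk] := Omega_add_bounded Of ck k0 kB.
exists (f \+ k); split; last by lra.
split=> // s /andP [s0 st] /=.
rewrite /k !clamp_id; [|by apply/andP; split; lra|by apply/andP; split; lra].
have := fS s; rewrite s0 st => /(_ isT) fst.
have : 0 < d * (t - s) by rewrite mulr_gt0 // subr_gt0.
rewrite mulrBr; lra.
Qed.

Lemma StClosed_sub_closure_S t : t0 b c1 c2 <= t ->
  StClosed b c1 c2 t `<=` closureOmega (S b c1 c2).
Proof.
move=> t0t f [Of fS]; split=> // e e0.
have [cf _] := Of.
have t_gt0 : 0 < t := lt_le_trans t0_gt0 t0t.
have bt := t0_leP t0t; rewrite mulrBl in bt.
have c1_gt0 : 0 < c1 := lt_trans c2_gt0 c21.
have e4 : 0 < e / 4 by lra.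
have [de de_gt0 fde] := continuous_dist_lt (- t) cf e4.
set d := Num.min (de / 2) (e / (4 * c1)).
have d_gt0 : 0 < d.
  by rewrite lt_min; apply/andP; split; [lra | rewrite divr_gt0 ?mulr_gt0].
have [dde dc1] : d <= de / 2 /\ d <= e / (4 * c1) by rewrite /d !ge_min !lexx !orbT.
have c1d : c1 * d <= e / 4.
  have -> : e / 4 = c1 * (e / (4 * c1)) by field; rewrite gt_eqF.
  by rewrite ler_pM2l.
have tdt : - (t + d) <= - t by lra.
(* f + k is f on [-t, oo), falls with slope c1 on [-(t + d), -t], and is a
   vertical translate of f below -(t + d). *)
pose c x := clamp (- (t + d)) (- t) x.
pose k x := f (- t) - f (c x) + c1 * (c x + t).
have ck : continuous k.
  move=> x.
  apply: (@continuousD _ _ _ (fun x => f (- t) - f (c x)) (fun x => c1 * (c x + t))).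
    apply: (@continuousB _ _ _ (fun=> f (- t)) (f \o c)); first exact: cst_continuous.
    by apply: continuous_comp; [exact: clamp_continuous | exact: cf].
  apply: (@continuousM _ _ (fun=> c1) (fun x => c x + t)); first exact: cst_continuous.
  apply: (@continuousD _ _ _ c (fun=> t)); first exact: clamp_continuous.
  exact: cst_continuous.
have k0 : k 0 = 0.
  by rewrite /k /c clamp_hi //; [rewrite subrr addNr mulr0 addr0 | lra].
have kB : forall x, `|k x| <= e / 2.
  move=> x; have /andP [cx1 cx2] : - (t + d) <= c x <= - t := clamp_itv x tdt.
  have : `|f (- t) - f (c x)| < e / 4 by apply: fde; rewrite ger0_norm; lra.
  have : c1 * (c x + t) <= 0 by rewrite pmulr_rle0 //; lra.
  have : - (c1 * d) <= c1 * (c x + t) by rewrite -mulrN ler_pM2l //; lra.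
  rewrite /k ltr_norml ler_norml => ? ? /andP [? ?]; apply/andP; split; lra.
have [Ofk fk] := Omega_add_bounded Of ck k0 kB.
exists (f \+ k); split; last by lra.
exists (t + d); first by rewrite /=; lra.
split=> // s /andP [s0 st'] /=.
have ktd : k (- (t + d)) = f (- t) - f (- (t + d)) - c1 * d.
  by rewrite /k /c clamp_lo ?lexx // (_ : - (t + d) + t = - d) ?mulrN; lra.
have c2c1 : c2 * d < c1 * d by rewrite ltr_pM2r.
rewrite ktd mulrDr.
have [st|ts] := leP s t.
  have -> : k (- s) = 0 by rewrite /k /c clamp_hi ?subrr ?addNr ?mulr0 ?addr0 //; lra.
  have fst : b + c2 * t - c1 * s <= f (- s) - f (- t).
    move: st; rewrite le_eqVlt => /orP [/eqP ->|st]; first by rewrite subrr; lra.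
    by apply: fS; rewrite s0 st.
  lra.
rewrite /k /c clamp_id; last by apply/andP; split; lra.
rewrite mulrDr mulrN; lra.
Qed.

Lemma St_endpoint_ge g t : St b c1 c2 t g -> 0 < t -> b + c2 * t <= - g (- t).
Proof.
move=> [[cg [g0 _]] gS] t_gt0; apply/ler_addgt0Pr => eps eps0.
have c1_gt0 : 0 < c1 := lt_trans c2_gt0 c21.
have eps2 : 0 < eps / 2 by lra.
have [de de_gt0 gde] := continuous_dist_lt 0 cg eps2.
set s := Num.min (de / 2) (Num.min (eps / (2 * c1)) (t / 2)).
have [sde sc1 st] : [/\ s <= de / 2, s <= eps / (2 * c1) & s <= t / 2].
  by rewrite /s !ge_min !lexx !orbT.
have s_gt0 : 0 < s.
  by rewrite /s !lt_min; apply/and3P; split; rewrite ?divr_gt0 ?mulr_gt0 //; lra.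
have c1s : c1 * s <= eps / 2.
  have -> : eps / 2 = c1 * (eps / (2 * c1)) by field; rewrite gt_eqF.
  by rewrite ler_pM2l.
have : `|g 0 - g (- s)| < eps / 2 by apply: gde; rewrite sub0r opprK gtr0_norm //; lra.
rewrite g0 sub0r normrN ltr_norml => /andP [_ gs].
have : b + c2 * t - c1 * s < g (- s) - g (- t) by apply: gS; apply/andP; split; lra.
lra.
Qed.

Definition approx_times f e : set R :=
  [set t | t0 b c1 c2 < t /\ exists2 g, St b c1 c2 t g & normOmega (f \- g) < e].

Lemma approx_times_bounded f : Omega f ->
  exists M, forall t, approx_times f (c2 / 4) t -> t <= M.
Proof.
move=> Of; have [_ [_ [_ fninfty]]] := Of.
have c24 : 0 < c2 / 4 by rewrite divr_gt0.
have [T [_ fT]] := (cvgrPdist_lt _ _).1 fninfty _ c24.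
exists (Num.max (- T) 1) => t [t0t [g Sg fge]].
have t_gt0 : 0 < t := lt_trans t0_gt0 t0t.
rewrite le_max; have [//|Tt] := leP t (- T).
have Og : Omega g by case: Sg.
have : `|f (- t)| < c2 / 4 * (1 + t).
  have /fT : - t < T by lra.
  by rewrite sub0r normrN norm_weighted normrN (gtr0_norm t_gt0) ltr_pdivrMr //; lra.
have := normOmega_lt_pointwise (- t) Of Og fge; rewrite normrN (gtr0_norm t_gt0).
have := St_endpoint_ge Sg t_gt0.
rewrite ler_norml ltr_norml mulrDr mulr1 => gt /andP [fg1 fg2] /andP [ft1 ft2].
have : c2 * t < c2 * 1 by have := b_gt0; lra.
by rewrite ltr_pM2l // => /ltW ->; rewrite orbT.
Qed.

Lemma closure_S_sub f : closureOmega (S b c1 c2) f ->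
  exists2 ts, t0 b c1 c2 <= ts & StClosed b c1 c2 ts f.
Proof.
move=> [Of fS]; have [M HM] := approx_times_bounded Of.
have c24 : 0 < c2 / 4 by rewrite divr_gt0.
have mono e1 e2 : e1 <= e2 -> approx_times f e1 `<=` approx_times f e2.
  by move=> e12 t [t0t [g Sg fge]]; split=> //; exists g => //; exact: lt_le_trans e12.
have ne e : 0 < e -> approx_times f e !=set0.
  by move=> /(fS e) [g [[t t0t Sg] fge]]; exists t; split=> //; exists g.
have lb e : approx_times f e `<=` [set t | t0 b c1 c2 <= t] by move=> t [/ltW].
have [ts t0ts cl] := shrinking_sets_cluster c24 mono ne lb HM.
exists ts => //; apply: StClosed_of_approx => // d e d_gt0 e_gt0.
by have [t [_ [g Sg fge]] td] := cl d e d_gt0 e_gt0; exists t, g.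
Qed.

End Closures.

Theorem lemmaA1 (R : realType) (b c1 c2 : R) (hb : 0 < b) (hc2 : 0 < c2) (hc : c2 < c1) :
  (forall t : R, t0 b c1 c2 <= t ->
     closureOmega (St b c1 c2 t) = StClosed b c1 c2 t) /\
  closureOmega (S b c1 c2) =
    \bigcup_(t in [set t : R | t0 b c1 c2 <= t]) closureOmega (St b c1 c2 t).
Proof.
have closure_St t : t0 b c1 c2 <= t -> closureOmega (St b c1 c2 t) = StClosed b c1 c2 t.
  move=> t0t; apply/seteqP; split=> f; first exact: closure_St_sub.
  exact: StClosed_sub_closure_St.
split=> //; apply/seteqP; split=> f.
  by move=> /closure_S_sub [] // ts t0ts fts; exists ts; rewrite // closure_St.
by move=> [t t0t]; rewrite closure_St //; exact: StClosed_sub_closure_S.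
Qed.
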